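(* Let $X$ be a metrizable space and $\mathcal{U}$ an open cover of $X$. Then there is an l-complete continuous dissection $\mathcal{F}$ over $X$ such that every minimal $\mathcal{F}$-wedge is contained in $U\times I$ for some $U\in\mathcal{U}$.
   Context: Let $I=(0,1]$. For a metrizable space $X$, a continuous dissection over $X$ is a family $\mathcal{F}$ of continuous functions $X\to[0,1]$ containing the constant functions $0$ and $1$ that is locally finite: every $x\in X$ has a neighbourhood $U$ such that $\{\xi|_U:\xi\in\mathcal{F}\}$ is finite. It is l-complete if it is closed under pointwise maximum, pointwise minimum and pointwise limits of convergent directed families. An $\mathcal{F}$-wedge is a subset of $X\times I$ of the form $\{(x,t):\xi_1(x)<t\le\xi_2(x)\}$ with $\xi_1,\xi_2\in\mathcal{F}$; a minimal $\mathcal{F}$-wedge is a nonempty $\mathcal{F}$-wedge minimal under inclusion. *)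

From Stdlib Require Import Reals List.
Open Scope R_scope.

(* A metric space.  Every notion below (open set, continuity, local
   finiteness) is topological, so quantifying over metric spaces is the
   same as quantifying over metrizable spaces. *)
Record MetricSpace := {
  mcarrier :> Type;
  mdist : mcarrier -> mcarrier -> R;
  mdist_nonneg : forall x y, 0 <= mdist x y;
  mdist_eq0 : forall x y, mdist x y = 0 <-> x = y;
  mdist_sym : forall x y, mdist x y = mdist y x;
  mdist_tri : forall x y z, mdist x z <= mdist x y + mdist y z
}.

Section Defs.
Variable X : MetricSpace.

Definition is_open (U : X -> Prop) : Prop :=
  forall x, U x -> exists eps, 0 < eps /\ forall y, mdist X x y < eps -> U y.

Definition open_cover (UU : (X -> Prop) -> Prop) : Prop :=
  (forall U, UU U -> is_open U) /\ (forall x, exists U, UU U /\ U x).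

Definition continuous_fun (f : X -> R) : Prop :=
  forall x eps, 0 < eps -> exists delta, 0 < delta /\
    forall y, mdist X x y < delta -> Rabs (f y - f x) < eps.

Definition locally_finite (F : (X -> R) -> Prop) : Prop :=
  forall x, exists U : X -> Prop, is_open U /\ U x /\
    exists l : list (X -> R),
      forall f, F f -> exists g, In g l /\ forall y, U y -> f y = g y.

Definition continuous_dissection (F : (X -> R) -> Prop) : Prop :=
  (forall f, F f -> continuous_fun f /\ forall x, 0 <= f x <= 1) /\
  F (fun _ => 0) /\ F (fun _ => 1) /\
  locally_finite F.

Definition directed_family_converges (F : (X -> R) -> Prop)
  (I : Type) (le : I -> I -> Prop) (f : I -> X -> R) (g : X -> R) : Prop :=
  (forall i, le i i) /\ (forall i j k, le i j -> le j k -> le i k) /\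
  inhabited I /\ (forall i j, exists k, le i k /\ le j k) /\
  (forall i, F (f i)) /\
  (forall x eps, 0 < eps -> exists i0, forall i, le i0 i ->
     Rabs (f i x - g x) < eps).

Definition l_complete (F : (X -> R) -> Prop) : Prop :=
  (forall f g, F f -> F g -> F (fun x => Rmax (f x) (g x))) /\
  (forall f g, F f -> F g -> F (fun x => Rmin (f x) (g x))) /\
  (forall (I : Type) (le : I -> I -> Prop) (f : I -> X -> R) (g : X -> R),
     directed_family_converges F I le f g -> F g).

(* The F-wedge between xi1 and xi2, as a subset of X x I with I = (0,1]. *)
Definition wedge (xi1 xi2 : X -> R) (p : X * R) : Prop :=
  0 < snd p <= 1 /\ xi1 (fst p) < snd p /\ snd p <= xi2 (fst p).

Definition is_wedge (F : (X -> R) -> Prop) (W : X * R -> Prop) : Prop :=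
  exists xi1 xi2, F xi1 /\ F xi2 /\ forall p, W p <-> wedge xi1 xi2 p.

Definition minimal_wedge (F : (X -> R) -> Prop) (W : X * R -> Prop) : Prop :=
  is_wedge F W /\ (exists p, W p) /\
  forall W', is_wedge F W' -> (exists p, W' p) ->
    (forall p, W' p -> W p) -> forall p, W p -> W' p.

End Defs.

(* The proof has two independent halves.
   (1) An abstract construction.  Suppose (phi_k) is a family of continuous
   [0,1]-valued functions indexed by a well-ordered set J, locally finite,
   with each phi_k supported in a member of UU, and with phi_k x = 1 for some
   k at every point x.  Let F consist of the suprema  sup_{k in P} phi_k  over
   the initial segments P of J.  Initial segments form a chain, so F is closed
   under max and min; local finiteness of (phi_k) makes F locally finite and
   its members continuous; the limit of a convergent net of such suprema is
   the supremum over the segment of indices eventually present.  A minimal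
   F-wedge lies between the suprema over {k < i} and {k <= i} for some i, so
   it lies over the support of phi_i, hence over a member of UU.
   (2) Such a family exists: this is Rudin's proof that metric spaces are
   paracompact.  Well-order the subsets of X; at stage n pick centres p whose ball of
   radius 5/2^n lies in the least member b containing p and which are not yet
   covered by the balls of radius 1/2^j (j < n) chosen before; the bumps
   phi_(b,n) = sup_p clamp(2 - 2^n d(p,-)) over these centres do the job. *)
From Stdlib Require Import Reals List Lra Lia.
From Stdlib Require Import Classical ClassicalEpsilon FunctionalExtensionality.
From mathcomp Require ssreflect ssrbool eqtype boolp wochoice.
Open Scope R_scope.

Definition well_ordered {T : Type} (lo : T -> T -> Prop) : Prop :=
  (forall a b, lo a b -> lo b a -> a = b) /\
  (forall A : T -> Prop, (exists a, A a) ->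
     exists z, A z /\ forall a, A a -> lo z a).

Module WellOrdering.
Import ssreflect ssrbool eqtype boolp wochoice.

Lemma well_ordering_exists (T : Type) : exists lo : T -> T -> Prop, well_ordered lo.
Proof.
have [R woR] := @well_ordering_principle {classic T}.
have anti := @wo_chain_antisymmetric {classic T} R predT (fun A _ => woR A).
exists (fun a b => R a b); split.
- by move=> a b Rab Rba; apply: anti => //; rewrite Rab Rba.
- move=> A [a Aa].
  have [|z [[Az lbz] _]] := woR [pred y : {classic T} | `[< A y >] ].
    by exists a; rewrite inE; apply/asboolP.
  exists z; split; first by move: Az; rewrite inE => /asboolP.
  by move=> y Ay; apply: lbz; rewrite inE; apply/asboolP.
Qed.
End WellOrdering.

Section WellOrderFacts.
Context {T : Type} {lo : T -> T -> Prop} (lo_wo : well_ordered lo).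

Lemma wo_antisym a b : lo a b -> lo b a -> a = b.
Proof. exact (proj1 lo_wo a b). Qed.

Lemma wo_least (A : T -> Prop) :
  (exists a, A a) -> exists z, A z /\ forall a, A a -> lo z a.
Proof. exact (proj2 lo_wo A). Qed.

(* Totality and transitivity follow by taking least elements of {a, b}
   and {a, b, c}. *)
Lemma wo_total a b : lo a b \/ lo b a.
Proof.
  destruct (wo_least (fun c => c = a \/ c = b)) as [z [[-> | ->] hz]]; eauto.
Qed.

Lemma wo_refl a : lo a a.
Proof. now destruct (wo_total a a). Qed.

Lemma wo_trans a b c : lo a b -> lo b c -> lo a c.
Proof.
  intros hab hbc.
  destruct (wo_least (fun z => z = a \/ z = b \/ z = c)) as [m [hm hmin]]; [eauto|].
  destruct hm as [-> | [-> | ->]].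
  - apply hmin; auto.
  - rewrite (wo_antisym a b hab (hmin a (or_introl eq_refl))). exact hbc.
  - rewrite <- (wo_antisym b c hbc (hmin b (or_intror (or_introl eq_refl)))). exact hab.
Qed.
End WellOrderFacts.

(* The supremum of the values v i over the indices i satisfying P; it is
   only used for families of values in [0,1], and is 0 for empty P. *)
Section BoundedSup.
Context {I : Type}.

Definition values (P : I -> Prop) (v : I -> R) (t : R) : Prop :=
  exists i, P i /\ t = v i.

Definition psup (P : I -> Prop) (v : I -> R) : R :=
  match excluded_middle_informative (bound (values P v) /\ exists t, values P v t) with
  | left h => proj1_sig (completeness _ (proj1 h) (proj2 h))
  | right _ => 0
  end.

Lemma psup_ub P v i : (forall j, v j <= 1) -> P i -> v i <= psup P v.
Proof.
  intros hv hi. unfold psup. destruct excluded_middle_informative as [h | h].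
  - destruct (completeness _ _ _) as [m hm]; simpl; destruct hm as [hub _]. apply hub. now exists i.
  - exfalso. apply h. split; [exists 1; intros t [j [_ ->]]; apply hv | now exists (v i), i].
Qed.

Lemma psup_le P v b : (forall i, P i -> v i <= b) -> 0 <= b -> psup P v <= b.
Proof.
  intros hv hb. unfold psup. destruct excluded_middle_informative as [h | h]; [|exact hb].
  destruct (completeness _ _ _) as [m hm]; simpl; destruct hm as [_ hleast].
  apply hleast. intros t [i [hi ->]]. now apply hv.
Qed.

Lemma psup_nonneg P v : (forall i, 0 <= v i) -> 0 <= psup P v.
Proof.
  intros hv. unfold psup. destruct excluded_middle_informative as [h | h]; [|lra].
  destruct (completeness _ _ _) as [m hm]; simpl; destruct hm as [hub _].
  destruct h as [_ [t [i [hi ht]]]].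
  apply Rle_trans with (v i); [apply hv | apply hub; now exists i].
Qed.

Lemma psup_exceeds P v b : 0 <= b -> b < psup P v -> exists i, P i /\ b < v i.
Proof.
  intros hb hlt. apply NNPP. intros hnone.
  assert (psup P v <= b); [|lra].
  apply psup_le; [|exact hb]. intros i hi. apply Rnot_lt_le. intros hbi. eauto.
Qed.
End BoundedSup.

Definition net_converges {I : Type} (le : I -> I -> Prop) (u : I -> R) (L : R) : Prop :=
  forall eps, 0 < eps -> exists i0, forall i, le i0 i -> Rabs (u i - L) < eps.

Lemma net_limit_ge {I : Type} (le : I -> I -> Prop) (u : I -> R) L b :
  (forall i j, exists k, le i k /\ le j k) -> net_converges le u L ->
  (exists i1, forall i, le i1 i -> b <= u i) -> b <= L.
Proof.
  intros hdir hconv [i1 hi1]. apply Rnot_lt_le. intros hlt.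
  destruct (hconv (b - L)) as [i2 hi2]; [lra|].
  destruct (hdir i1 i2) as [i [h1 h2]].
  specialize (hi1 i h1). specialize (hi2 i h2). apply Rabs_def2 in hi2. lra.
Qed.

Lemma net_limit_le {I : Type} (le : I -> I -> Prop) (u : I -> R) L b :
  net_converges le u L -> (forall i0, exists i, le i0 i /\ u i <= b) -> L <= b.
Proof.
  intros hconv hfreq. apply Rnot_lt_le. intros hlt.
  destruct (hconv (L - b)) as [i0 hi0]; [lra|].
  destruct (hfreq i0) as [i [hi hub]].
  specialize (hi0 i hi). apply Rabs_def2 in hi0. lra.
Qed.


Section SegmentDissection.
Variable X : MetricSpace.
Variable UU : (X -> Prop) -> Prop.
Variable J : Type.
Variable lo : J -> J -> Prop.
Hypothesis lo_wo : well_ordered lo.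
Variable phi : J -> X -> R.
Hypothesis phi_cont : forall k, continuous_fun X (phi k).
Hypothesis phi_range : forall k y, 0 <= phi k y <= 1.
Hypothesis phi_subordinate : forall k y, 0 < phi k y ->
  exists U, UU U /\ forall z, 0 < phi k z -> U z.
Hypothesis phi_top : forall x, exists k, phi k x = 1.
Hypothesis phi_locfin : forall x, exists V, is_open X V /\ V x /\
  exists L : list J, forall k y, V y -> phi k y <> 0 -> In k L.

Definition down_closed (P : J -> Prop) : Prop := forall a b, lo a b -> P b -> P a.

Definition seg_sup (P : J -> Prop) (y : X) : R := psup P (fun k => phi k y).

Definition seg_family (f : X -> R) : Prop :=
  exists P, down_closed P /\ f = seg_sup P.

Lemma seg_sup_ub P k y : P k -> phi k y <= seg_sup P y.
Proof. apply (psup_ub P (fun j => phi j y)). intros j. apply (phi_range j y). Qed.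

Lemma seg_sup_le P y b : (forall k, P k -> phi k y <= b) -> 0 <= b -> seg_sup P y <= b.
Proof. apply psup_le. Qed.

Lemma seg_sup_range P y : 0 <= seg_sup P y <= 1.
Proof.
  split.
  - apply psup_nonneg. intros k. apply (phi_range k y).
  - apply seg_sup_le; [intros k _; apply (phi_range k y) | lra].
Qed.

Lemma seg_sup_mono P Q y : (forall k, P k -> Q k) -> seg_sup P y <= seg_sup Q y.
Proof.
  intros hPQ. apply seg_sup_le; [|apply seg_sup_range].
  intros k hk. apply seg_sup_ub, hPQ, hk.
Qed.

Lemma down_closed_comparable P Q : down_closed P -> down_closed Q ->
  (forall k, P k -> Q k) \/ (forall k, Q k -> P k).
Proof.
  intros hP hQ. destruct (classic (forall k, P k -> Q k)) as [h | h]; [now left | right].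
  apply not_all_ex_not in h. destruct h as [k hk].
  apply imply_to_and in hk. destruct hk as [hPk hQk].
  intros a ha. destruct (wo_total lo_wo a k) as [hak | hka].
  - exact (hP a k hak hPk).
  - exfalso. exact (hQk (hQ k a hka ha)).
Qed.

(* Locally, a supremum over a segment is a maximum over a finite list. *)
Fixpoint list_max (l : list J) (y : X) : R :=
  match l with
  | nil => 0
  | k :: l' => Rmax (phi k y) (list_max l' y)
  end.

Lemma list_max_nonneg l y : 0 <= list_max l y.
Proof.
  induction l as [|k l IH]; simpl; [lra|].
  apply Rle_trans with (list_max l y); [exact IH | apply Rmax_r].
Qed.

Lemma list_max_ub l k y : In k l -> phi k y <= list_max l y.
Proof.
  induction l as [|a l IH]; simpl; [intros []|].
  intros [-> | hk]; [apply Rmax_l|].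
  apply Rle_trans with (list_max l y); [exact (IH hk) | apply Rmax_r].
Qed.

Lemma list_max_attained l y : list_max l y = 0 \/ exists k, In k l /\ list_max l y = phi k y.
Proof.
  induction l as [|a l IH]; simpl; [now left|].
  destruct (Rle_dec (phi a y) (list_max l y)) as [h | h].
  - rewrite Rmax_right by exact h.
    destruct IH as [e | (k & hk & e)]; [now left | right; exists k; tauto].
  - rewrite Rmax_left by lra. right. exists a. tauto.
Qed.

Lemma list_max_cont l : continuous_fun X (list_max l).
Proof.
  induction l as [|k l IH]; simpl; intros x eps heps.
  - exists 1. split; [lra|]. intros y _. rewrite Rminus_diag, Rabs_R0. exact heps.
  - destruct (phi_cont k x eps heps) as [d1 [hd1 h1]].
    destruct (IH x eps heps) as [d2 [hd2 h2]].
    exists (Rmin d1 d2). split; [apply Rmin_pos; assumption|].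
    intros y hy. pose proof (Rmin_l d1 d2). pose proof (Rmin_r d1 d2).
    specialize (h1 y ltac:(lra)). specialize (h2 y ltac:(lra)).
    apply Rabs_def2 in h1. apply Rabs_def2 in h2.
    unfold Rmax. repeat destruct Rle_dec; apply Rabs_def1; lra.
Qed.

Lemma seg_sup_as_list_max P l y :
  (forall k, P k -> phi k y <> 0 -> In k l) -> (forall k, In k l -> P k) ->
  seg_sup P y = list_max l y.
Proof.
  intros hin hP. apply Rle_antisym.
  - apply seg_sup_le; [|apply list_max_nonneg].
    intros k hk. destruct (Req_dec (phi k y) 0) as [e | e].
    + rewrite e. apply list_max_nonneg.
    + apply list_max_ub, hin; assumption.
  - destruct (list_max_attained l y) as [e | (k & hk & e)]; rewrite e.
    + apply seg_sup_range.
    + apply seg_sup_ub, hP, hk.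
Qed.

(* The sublists of a list, enumerating the possible restrictions of a
   segment to the finitely many indices visible near a point. *)
Fixpoint sublists (l : list J) : list (list J) :=
  match l with
  | nil => nil :: nil
  | a :: l' => map (cons a) (sublists l') ++ sublists l'
  end.

Definition decide (P : J -> Prop) (k : J) : bool :=
  if excluded_middle_informative (P k) then true else false.

Lemma decide_spec P k : decide P k = true <-> P k.
Proof. unfold decide. destruct excluded_middle_informative; intuition discriminate. Qed.

Lemma filter_in_sublists P l : In (filter (decide P) l) (sublists l).
Proof.
  induction l as [|a l IH]; simpl; [now left|].
  apply in_or_app. destruct (decide P a); [left; now apply in_map | now right].
Qed.

Lemma seg_sup_locally_finite x : exists V, is_open X V /\ V x /\
  exists Ls : list (list J), forall P, exists l, In l Ls /\
    forall y, V y -> seg_sup P y = list_max l y.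
Proof.
  destruct (phi_locfin x) as [V [hV [hx [L hL]]]].
  exists V. split; [exact hV | split; [exact hx|]].
  exists (sublists L). intros P. exists (filter (decide P) L).
  split; [apply filter_in_sublists|].
  intros y hy. apply seg_sup_as_list_max.
  - intros k hk hnz. apply filter_In. split; [eapply hL; eassumption | now apply decide_spec].
  - intros k hk. apply filter_In in hk. now apply decide_spec.
Qed.

Lemma seg_sup_cont P : continuous_fun X (seg_sup P).
Proof.
  intros x eps heps.
  destruct (seg_sup_locally_finite x) as [V [hV [hx [Ls hLs]]]].
  destruct (hLs P) as [l [_ hl]].
  destruct (hV x hx) as [e0 [he0 hball]].
  destruct (list_max_cont l x eps heps) as [d1 [hd1 h1]].
  exists (Rmin d1 e0). split; [apply Rmin_pos; assumption|].
  intros y hy. pose proof (Rmin_l d1 e0). pose proof (Rmin_r d1 e0).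
  rewrite (hl y), (hl x hx) by (apply hball; lra).
  apply h1. lra.
Qed.

(* Since segments form a chain, the max and the min of two members of the
   family are again suprema over one of the two segments. *)
Lemma seg_family_max f g : seg_family f -> seg_family g ->
  seg_family (fun x => Rmax (f x) (g x)).
Proof.
  intros [P [hP ->]] [Q [hQ ->]].
  destruct (down_closed_comparable P Q hP hQ) as [hPQ | hQP].
  - exists Q. split; [exact hQ|]. extensionality y. apply Rmax_right, seg_sup_mono, hPQ.
  - exists P. split; [exact hP|]. extensionality y. apply Rmax_left, seg_sup_mono, hQP.
Qed.

Lemma seg_family_min f g : seg_family f -> seg_family g ->
  seg_family (fun x => Rmin (f x) (g x)).
Proof.
  intros [P [hP ->]] [Q [hQ ->]].
  destruct (down_closed_comparable P Q hP hQ) as [hPQ | hQP].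
  - exists P. split; [exact hP|]. extensionality y. apply Rmin_left, seg_sup_mono, hPQ.
  - exists Q. split; [exact hQ|]. extensionality y. apply Rmin_right, seg_sup_mono, hQP.
Qed.

Definition eventually_in {I : Type} (le : I -> I -> Prop) (Ps : I -> J -> Prop) : J -> Prop :=
  fun k => exists i0, forall i, le i0 i -> Ps i k.

Lemma eventually_in_closed {I : Type} (le : I -> I -> Prop) (Ps : I -> J -> Prop) :
  (forall i, down_closed (Ps i)) -> down_closed (eventually_in le Ps).
Proof. intros hPs a b hab [i0 hi0]. exists i0. intros i hi. exact (hPs i a b hab (hi0 i hi)). Qed.

(* A convergent net of segment suprema converges to the supremum over the
   indices eventually present: an index of value above that supremum drops
   out of the net frequently, and then so do all larger indices. *)
Lemma seg_sup_net_limit {I : Type} (le : I -> I -> Prop) (Ps : I -> J -> Prop) x L :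
  inhabited I -> (forall i j, exists k, le i k /\ le j k) ->
  (forall i, down_closed (Ps i)) ->
  net_converges le (fun i => seg_sup (Ps i) x) L ->
  L = seg_sup (eventually_in le Ps) x.
Proof.
  intros [i1] hdir hPs hconv.
  set (s := seg_sup (eventually_in le Ps) x).
  assert (hs : 0 <= s) by apply seg_sup_range.
  assert (hL : 0 <= L).
  { apply (net_limit_ge le _ L 0 hdir hconv). exists i1. intros i _. apply seg_sup_range. }
  apply Rle_antisym.
  - apply (net_limit_le le _ L s hconv). intros i0.
    destruct (classic (exists k, s < phi k x)) as [hex | hnone].
    + destruct (wo_least lo_wo _ hex) as [ks [hks hleast]].
      assert (hgone : ~ eventually_in le Ps ks).
      { intros hev. pose proof (seg_sup_ub _ _ x hev). unfold s in *. lra. }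
      assert (hdrop : exists i, le i0 i /\ ~ Ps i ks).
      { apply NNPP. intros hn. apply hgone. exists i0. intros i hi.
        apply NNPP. intros hnk. apply hn. now exists i. }
      destruct hdrop as [i [hi hnk]]. exists i. split; [exact hi|].
      apply seg_sup_le; [|exact hs]. intros k hk. apply Rnot_lt_le. intros hlt.
      exact (hnk (hPs i ks k (hleast k hlt) hk)).
    + destruct (hdir i0 i0) as [i [hi _]]. exists i. split; [exact hi|].
      apply seg_sup_le; [|exact hs]. intros k _. apply Rnot_lt_le. intros hlt.
      apply hnone. now exists k.
  - apply seg_sup_le; [|exact hL]. intros k [i2 hi2].
    apply (net_limit_ge le _ L _ hdir hconv). exists i2. intros i hi.
    apply seg_sup_ub, hi2, hi.
Qed.

Lemma seg_family_limit (I : Type) (le : I -> I -> Prop) (f : I -> X -> R) (g : X -> R) :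
  directed_family_converges X seg_family I le f g -> seg_family g.
Proof.
  intros (_ & _ & hinh & hdir & hF & hconv).
  destruct (choice (fun i P => down_closed P /\ f i = seg_sup P) hF) as [Ps hPs].
  exists (eventually_in le Ps). split; [apply eventually_in_closed; intros i; apply hPs|].
  extensionality x. apply seg_sup_net_limit; [exact hinh | exact hdir | intros i; apply hPs|].
  intros eps heps. destruct (hconv x eps heps) as [i0 hi0]. exists i0.
  intros i hi. rewrite <- (proj2 (hPs i)). exact (hi0 i hi).
Qed.

(* Continuity and local finiteness come from seg_sup_locally_finite; the
   constants 0 and 1 are the suprema over the empty and the full segment. *)
Lemma seg_family_dissection : continuous_dissection X seg_family.
Proof.
  split; [|split; [|split]].
  - intros f [P [_ ->]]. split; [apply seg_sup_cont | apply seg_sup_range].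
  - exists (fun _ => False). split; [intros a b _ []|].
    extensionality y. apply Rle_antisym; [apply seg_sup_range|].
    apply seg_sup_le; [intros k [] | lra].
  - exists (fun _ => True). split; [intros a b _ _; exact I|].
    extensionality y. apply Rle_antisym; [|apply seg_sup_range].
    destruct (phi_top y) as [k hk]. rewrite <- hk. apply seg_sup_ub. exact I.
  - intros x. destruct (seg_sup_locally_finite x) as [V [hV [hx [Ls hLs]]]].
    exists V. split; [exact hV | split; [exact hx|]].
    exists (map list_max Ls). intros f [P [_ ->]].
    destruct (hLs P) as [l [hl heq]]. exists (list_max l).
    split; [apply in_map, hl | exact heq].
Qed.

Lemma seg_family_l_complete : l_complete X seg_family.
Proof.
  split; [exact seg_family_max | split; [exact seg_family_min | exact seg_family_limit]].
Qed.

Definition strictly_below (i : J) (k : J) : Prop := lo k i /\ k <> i.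
Definition below (i : J) (k : J) : Prop := lo k i.

Lemma strictly_below_closed i : down_closed (strictly_below i).
Proof.
  intros a b hab [hbi hne]. split; [exact (wo_trans lo_wo a b i hab hbi)|].
  intros ->. exact (hne (wo_antisym lo_wo b i hbi hab)).
Qed.

Lemma below_closed i : down_closed (below i).
Proof. intros a b hab hbi. exact (wo_trans lo_wo a b i hab hbi). Qed.

Lemma step_wedge_support i y s :
  wedge X (seg_sup (strictly_below i)) (seg_sup (below i)) (y, s) -> 0 < phi i y.
Proof.
  intros [_ [hlt hle]]; simpl in *. apply Rnot_le_lt. intros hzero.
  assert (seg_sup (below i) y <= seg_sup (strictly_below i) y); [|lra].
  apply seg_sup_le; [|apply seg_sup_range]. intros k hk.
  destruct (classic (k = i)) as [-> | hne].
  - pose proof (seg_sup_range (strictly_below i) y). lra.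
  - apply seg_sup_ub. split; assumption.
Qed.

Lemma segment_excluding P i : down_closed P -> ~ P i ->
  forall k, P k -> strictly_below i k.
Proof.
  intros hP hi k hk. destruct (wo_total lo_wo k i) as [hki | hik].
  - split; [exact hki|]. intros ->. exact (hi hk).
  - exfalso. exact (hi (hP i k hik hk)).
Qed.

(* A nonempty wedge contains a step wedge at the least index i of Q whose
   bump rises above the lower boundary at a point of the wedge; a minimal
   wedge therefore equals that step wedge. *)
Lemma minimal_wedge_small W : minimal_wedge X seg_family W ->
  exists U, UU U /\ forall x t, W (x, t) -> U x.
Proof.
  intros [[xi1 [xi2 [[P [hP ->]] [[Q [hQ ->]] hW]]]] [[[x t] hxt] hmin]].
  destruct (proj1 (hW (x, t)) hxt) as [_ [hPx hQx]]; simpl in *.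
  assert (hP0 : 0 <= seg_sup P x) by apply seg_sup_range.
  destruct (wo_least lo_wo (fun k => Q k /\ seg_sup P x < phi k x)) as [i [[hQi hi] hleast]].
  { apply (psup_exceeds Q (fun k => phi k x)); [exact hP0 | unfold seg_sup in hQx; lra]. }
  assert (hPi : ~ P i).
  { intros hPi. pose proof (seg_sup_ub P i x hPi). lra. }
  set (step := wedge X (seg_sup (strictly_below i)) (seg_sup (below i))).
  assert (hstep_W : forall p, step p -> W p).
  { intros [y s] hys. apply hW. destruct hys as [hs [hlo hhi]]; simpl in *.
    pose proof (seg_sup_mono P (strictly_below i) y (segment_excluding P i hP hPi)).
    pose proof (seg_sup_mono (below i) Q y (fun k hk => hQ k i hk hQi)).
    split; [exact hs | simpl; lra]. }
  assert (hstep_ne : step (x, phi i x)).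
  { assert (seg_sup (strictly_below i) x <= seg_sup P x).
    { apply seg_sup_le; [|exact hP0]. intros k [hki hne]. apply Rnot_lt_le. intros hlt.
      exact (hne (wo_antisym lo_wo k i hki (hleast k (conj (hQ k i hki hQi) hlt)))). }
    pose proof (seg_sup_ub (below i) i x (wo_refl lo_wo i)).
    pose proof (phi_range i x). split; simpl; lra. }
  assert (hW_step : forall p, W p -> step p).
  { apply hmin; [|now exists (x, phi i x) | exact hstep_W].
    exists (seg_sup (strictly_below i)), (seg_sup (below i)).
    split; [now exists (strictly_below i); split; [apply strictly_below_closed|]|].
    split; [now exists (below i); split; [apply below_closed|]|].
    intros p. reflexivity. }
  destruct (phi_subordinate i x) as [U [hU hsupp]]; [lra|].
  exists U. split; [exact hU|]. intros y s hys.
  apply hsupp, (step_wedge_support i y s), hW_step, hys.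
Qed.

Theorem segment_dissection_exists : exists F : (X -> R) -> Prop,
  continuous_dissection X F /\ l_complete X F /\
  forall W, minimal_wedge X F W -> exists U, UU U /\ forall x t, W (x, t) -> U x.
Proof.
  exists seg_family.
  split; [exact seg_family_dissection | split; [exact seg_family_l_complete | exact minimal_wedge_small]].
Qed.
End SegmentDissection.


Section RudinBumps.
Variable X : MetricSpace.
Variable UU : (X -> Prop) -> Prop.
Hypothesis UU_cover : open_cover X UU.
Variable lo : (X -> Prop) -> (X -> Prop) -> Prop.
Hypothesis lo_wo : well_ordered lo.

Notation d := (mdist X).

Lemma dist_self x : d x x = 0.
Proof. now apply mdist_eq0. Qed.

Definition radius (n : nat) : R := (/ 2) ^ n.

Lemma radius_pos n : 0 < radius n.
Proof. apply pow_lt. lra. Qed.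

Lemma radius_S n : radius (S n) = radius n / 2.
Proof. unfold radius. simpl. lra. Qed.

Lemma radius_anti m n : (m <= n)%nat -> radius n <= radius m.
Proof.
  induction 1 as [|n _ IH]; [lra|].
  rewrite radius_S. pose proof (radius_pos n). lra.
Qed.

Lemma radius_small e : 0 < e -> exists n, radius n < e.
Proof.
  intros he. destruct (pow_lt_1_zero (/ 2)) with (y := e) as [n hn];
    [rewrite Rabs_right; lra | exact he|].
  exists n. specialize (hn n (Nat.le_refl n)).
  rewrite Rabs_right in hn; [exact hn | left; apply radius_pos].
Qed.

Lemma scale_radius n t : 2 ^ n * t * radius n = t.
Proof.
  unfold radius. transitivity (t * (2 * / 2) ^ n); [rewrite Rpow_mult_distr; ring|].
  replace (2 * / 2) with 1 by field. rewrite pow1. ring.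
Qed.

Definition least_member (b : X -> Prop) (p : X) : Prop :=
  UU b /\ b p /\ forall c, UU c -> c p -> lo b c.

Definition is_centre (C : X -> Prop) (n : nat) (b : X -> Prop) (p : X) : Prop :=
  least_member b p /\ ~ C p /\ forall z, d p z < 5 * radius n -> b z.

Fixpoint covered (n : nat) : X -> Prop :=
  match n with
  | O => fun _ => False
  | S m => fun y => covered m y \/
             exists b p, is_centre (covered m) m b p /\ d p y < radius m
  end.

Definition centre (n : nat) (b : X -> Prop) (p : X) : Prop := is_centre (covered n) n b p.

Definition core (n : nat) (b : X -> Prop) (y : X) : Prop :=
  exists p, centre n b p /\ d p y < radius n.
Definition halo (n : nat) (b : X -> Prop) (y : X) : Prop :=
  exists p, centre n b p /\ d p y < 2 * radius n.

Lemma covered_iff n y : covered n y <-> exists j b, (j < n)%nat /\ core j b y.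
Proof.
  induction n as [|n IH]; simpl.
  - split; [intros [] | intros (j & b & hj & _); lia].
  - rewrite IH. split.
    + intros [(j & b & hj & hc) | (b & p & hc & hd)].
      * exists j, b. split; [lia | exact hc].
      * exists n, b. split; [lia | now exists p].
    + intros (j & b & hj & hc). destruct (Nat.eq_dec j n) as [-> | hne].
      * right. destruct hc as [p hp]. now exists b, p.
      * left. exists j, b. split; [lia | exact hc].
Qed.

(* Every point lies in some core: either it is covered at the stage where
   5/2^n fits in its least member, or it is itself a centre of that stage. *)
Lemma core_everywhere x : exists n b, core n b x.
Proof.
  destruct (proj2 UU_cover x) as [U hU].
  destruct (wo_least lo_wo (fun b => UU b /\ b x)) as [a [[ha hax] hleast]]; [now exists U|].
  destruct (proj1 UU_cover a ha x hax) as [eps [heps hball]].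
  destruct (radius_small (eps / 5)) as [n hn]; [lra|].
  destruct (classic (covered n x)) as [hcov | hncov].
  - apply covered_iff in hcov. destruct hcov as (j & b & _ & hc). now exists j, b.
  - exists n, a, x. split.
    + split; [split; [exact ha | split; [exact hax|]] | split; [exact hncov|]].
      * intros c hc hcx. apply hleast. now split.
      * intros z hz. apply hball. lra.
    + rewrite dist_self. apply radius_pos.
Qed.

Lemma centres_separated n a b p q :
  centre n a p -> centre n b q -> a <> b -> 5 * radius n <= d p q.
Proof.
  intros [[ha [_ hla]] [_ hba]] [[hb [_ hlb]] [_ hbb]] hne.
  apply Rnot_lt_le. intros hpq. apply hne.
  destruct (wo_total lo_wo a b) as [hab | hba'].
  - apply (wo_antisym lo_wo); [exact hab|]. apply hlb; [exact ha | apply hba, hpq].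
  - apply (wo_antisym lo_wo); [|exact hba']. apply hla; [exact hb|].
    apply hbb. rewrite mdist_sym. exact hpq.
Qed.

Lemma core_open n b y : core n b y ->
  exists delta, 0 < delta /\ forall z, d y z < delta -> core n b z.
Proof.
  intros [p [hp hd]]. exists (radius n - d p y). split; [lra|].
  intros z hz. exists p. split; [exact hp|]. pose proof (mdist_tri X p y z). lra.
Qed.

Lemma halo_in_member n b y : halo n b y -> UU b /\ b y.
Proof.
  intros [p [[[hb _] [_ hball]] hd]]. split; [exact hb|].
  apply hball. pose proof (radius_pos n). lra.
Qed.

(* Near a point x lying in the core of stage n, halos of late stages cannot
   appear: their centres would be covered by that core. *)
Lemma halo_levels_bounded x : exists N, forall m b y,
  d x y < radius N -> halo m b y -> (m <= N)%nat.
Proof.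
  destruct (core_everywhere x) as (n & a & hcore).
  destruct (core_open n a x hcore) as [delta [hdelta hball]].
  destruct (radius_small (delta / 3)) as [j hj]; [lra|].
  exists (Nat.max n j). intros m b y hy [q [[_ [hnq _]] hq]].
  destruct (Compare_dec.le_lt_dec m (Nat.max n j)) as [hm | hm]; [exact hm | exfalso].
  apply hnq, covered_iff. exists n, a. split; [lia|]. apply hball.
  assert (radius (Nat.max n j) <= radius j) by (apply radius_anti; lia).
  assert (radius m <= radius j) by (apply radius_anti; lia).
  pose proof (mdist_tri X x y q). rewrite (mdist_sym X y q) in *. lra.
Qed.

Lemma halo_one_per_level m b b' y y' :
  d y y' <= radius m -> halo m b y -> halo m b' y' -> b = b'.
Proof.
  intros hyy [p [hp hpy]] [p' [hp' hpy']].
  apply NNPP. intros hne. pose proof (centres_separated m b b' p p' hp hp' hne).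
  pose proof (mdist_tri X p y p'). pose proof (mdist_tri X y y' p').
  rewrite (mdist_sym X y' p') in *. lra.
Qed.

Definition clamp01 (v : R) : R := Rmax 0 (Rmin 1 v).

Lemma clamp01_range v : 0 <= clamp01 v <= 1.
Proof. unfold clamp01, Rmax, Rmin. repeat destruct Rle_dec; lra. Qed.

Lemma clamp01_lipschitz a b c : a <= b + c -> 0 <= c -> clamp01 a <= clamp01 b + c.
Proof. unfold clamp01, Rmax, Rmin. repeat destruct Rle_dec; lra. Qed.

Lemma clamp01_pos v : 0 < clamp01 v -> 0 < v.
Proof. unfold clamp01, Rmax, Rmin. repeat destruct Rle_dec; lra. Qed.

Lemma clamp01_one v : 1 <= v -> clamp01 v = 1.
Proof. unfold clamp01, Rmax, Rmin. repeat destruct Rle_dec; lra. Qed.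

(* The bump of (b, n): 1 on the core, 0 outside the halo, Lipschitz with
   constant 2^n. *)
Definition bump (k : (X -> Prop) * nat) (y : X) : R :=
  let '(b, n) := k in psup (centre n b) (fun p => clamp01 (2 - 2 ^ n * d p y)).

Lemma bump_range k y : 0 <= bump k y <= 1.
Proof.
  destruct k as [b n]. simpl. split.
  - apply psup_nonneg. intros p. apply clamp01_range.
  - apply psup_le; [intros p _; apply clamp01_range | lra].
Qed.

Lemma bump_pos_halo b n y : 0 < bump (b, n) y -> halo n b y.
Proof.
  intros hpos. simpl in hpos.
  destruct (psup_exceeds _ _ 0 (Rle_refl 0) hpos) as [p [hp hclamp]].
  exists p. split; [exact hp|]. apply clamp01_pos in hclamp.
  rewrite <- (scale_radius n (d p y)). pose proof (radius_pos n). nra.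
Qed.

Lemma bump_subordinate k y : 0 < bump k y ->
  exists U, UU U /\ forall z, 0 < bump k z -> U z.
Proof.
  destruct k as [b n]. intros hy. exists b. split.
  - exact (proj1 (halo_in_member n b y (bump_pos_halo b n y hy))).
  - intros z hz. exact (proj2 (halo_in_member n b z (bump_pos_halo b n z hz))).
Qed.

Lemma bump_top x : exists k, bump k x = 1.
Proof.
  destruct (core_everywhere x) as (n & b & p & hp & hd). exists (b, n).
  apply Rle_antisym; [apply bump_range|]. simpl.
  assert (hscaled : 2 ^ n * d p x < 1).
  { rewrite <- (scale_radius n (d p x)) in hd. pose proof (radius_pos n). nra. }
  rewrite <- (clamp01_one (2 - 2 ^ n * d p x)) by lra.
  apply (psup_ub _ (fun q => clamp01 (2 - 2 ^ n * d q x))); [|exact hp].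
  intros q. apply clamp01_range.
Qed.

Lemma bump_lipschitz b n y z : bump (b, n) y <= bump (b, n) z + 2 ^ n * d y z.
Proof.
  pose proof (pow_lt 2 n ltac:(lra)) as hpow.
  assert (hc : 0 <= 2 ^ n * d y z) by (apply Rmult_le_pos; [lra | apply mdist_nonneg]).
  pose proof (bump_range (b, n) z) as hz. simpl in *.
  apply psup_le; [|lra]. intros p hp.
  apply Rle_trans with (clamp01 (2 - 2 ^ n * d p z) + 2 ^ n * d y z).
  - apply clamp01_lipschitz; [|exact hc].
    assert (2 ^ n * d p z <= 2 ^ n * (d p y + d y z))
      by (apply Rmult_le_compat_l; [lra | apply mdist_tri]).
    lra.
  - apply Rplus_le_compat_r.
    apply (psup_ub _ (fun q => clamp01 (2 - 2 ^ n * d q z))); [|exact hp].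
    intros q. apply clamp01_range.
Qed.

Lemma bump_cont k : continuous_fun X (bump k).
Proof.
  destruct k as [b n]. intros x eps heps.
  exists (eps * radius n). split; [apply Rmult_lt_0_compat; [lra | apply radius_pos]|].
  intros y hy.
  assert (hscaled : 2 ^ n * d x y < eps).
  { rewrite <- (scale_radius n eps), Rmult_assoc.
    apply Rmult_lt_compat_l; [apply pow_lt; lra | exact hy]. }
  pose proof (bump_lipschitz b n y x). pose proof (bump_lipschitz b n x y).
  rewrite (mdist_sym X y x) in *. apply Rabs_def1; lra.
Qed.

(* Near x only the bumps of stages m <= N can be nonzero, and for each such
   stage only the one member whose halo comes close to x. *)
Lemma bump_locfin x : exists V, is_open X V /\ V x /\
  exists L : list ((X -> Prop) * nat), forall k y, V y -> bump k y <> 0 -> In k L.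
Proof.
  destruct (halo_levels_bounded x) as [N hN].
  set (rho := radius (S N)).
  assert (hrho : rho = radius N / 2) by apply radius_S.
  pose proof (radius_pos N).
  exists (fun y => d x y < rho). split; [|split].
  - intros y hy. exists (rho - d x y). split; [lra|].
    intros z hz. pose proof (mdist_tri X x y z). lra.
  - rewrite dist_self. lra.
  - set (near_halo := fun m b => exists y, d x y < rho /\ halo m b y).
    exists (map (fun m => (epsilon (inhabits (fun _ : X => False)) (near_halo m), m))
             (seq 0 (S N))).
    intros [b m] y hy hnz.
    assert (hhalo : halo m b y).
    { apply bump_pos_halo. pose proof (bump_range (b, m) y). lra. }
    assert (hm : (m <= N)%nat) by (apply (hN m b y); [lra | exact hhalo]).
    apply in_map_iff. exists m. split; [|apply in_seq; lia].
    destruct (epsilon_spec (inhabits (fun _ : X => False)) (near_halo m))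
      as [y' [hy' hhalo']]; [now exists b, y|].
    f_equal. symmetry. apply (halo_one_per_level m b _ y y'); [|exact hhalo | exact hhalo'].
    assert (radius N <= radius m) by (apply radius_anti; exact hm).
    pose proof (mdist_tri X y x y'). rewrite (mdist_sym X y x) in *. lra.
Qed.
End RudinBumps.

Theorem lemma4p5 (X : MetricSpace) (UU : (X -> Prop) -> Prop) :
  open_cover X UU ->
  exists F : (X -> R) -> Prop,
    continuous_dissection X F /\ l_complete X F /\
    forall W, minimal_wedge X F W ->
      exists U, UU U /\ forall x t, W (x, t) -> U x.
Proof.
  intros hcov.
  destruct (WellOrdering.well_ordering_exists (X -> Prop)) as [lo hlo].
  destruct (WellOrdering.well_ordering_exists ((X -> Prop) * nat)) as [lo_idx hlo_idx].
  apply (segment_dissection_exists X UU _ lo_idx hlo_idx (bump X UU lo)).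
  - apply bump_cont.
  - apply bump_range.
  - apply bump_subordinate.
  - exact (bump_top X UU hcov lo hlo).
  - exact (bump_locfin X UU hcov lo hlo).
Qed.
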